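(* Let $m\geq 2$ be an integer and $n'=2^{m-1}$. Then the number of subgroups of the direct product $\mathbb{Z}_2\times D_{2n'}$ is $$|L(\mathbb{Z}_2\times D_{2n'})|=5\sigma(n')+3\tau(n')-2n'-1.$$
   Context: $L(G)$ denotes the set of all subgroups of a group $G$. $D_{2n'}=\langle x,y\mid x^{n'}=y^2=e,\ y^{-1}xy=x^{-1}\rangle$ is the dihedral group of order $2n'$ (for $n'=2$ this is the Klein four-group). For a positive integer $k$, $\tau(k)$ is the number of positive divisors of $k$ and $\sigma(k)$ is their sum. *)

From mathcomp Require Import all_boot all_order all_algebra all_fingroup all_solvable.
Set Implicit Arguments. Unset Strict Implicit. Unset Printing Implicit Defensive.

Definition tau (k : nat) : nat := size (divisors k).
Definition sigma (k : nat) : nat := \sum_(d <- divisors k) d.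

(* The group Z_2 x D_{2^m}, as a finGroupType: 'Z_2 is the additive cyclic group of
   order 2, 'D_(2^m) is MathComp's dihedral group of order 2^m (extremal.v), i.e.
   D_{2n'} with n' = 2^(m-1), presented by <x,y | x^n', y^2, x^y = x^-1>. *)
Definition Z2xD (m : nat) : finGroupType := ('Z_2 * 'D_(2 ^ m))%type.

From mathcomp Require Import all_boot all_order all_algebra all_fingroup all_solvable.
From mathcomp Require Import zify.

(* A subgroup H of G that is not contained in a subgroup Y of index 2 is
   A :|: A :* s, where A = H :&: Y and s is any element of H :\: Y; the
   admissible s are the elements outside Y that normalise A and square into A,
   and each such H arises from exactly |A| of them.  In Z_2 x D_2n, with x a
   rotation of order n, take Y = Z_2 x <x>: every element outside Y is an
   involution inverting Y, so every A <= Y has 2n/|A| extensions.  Inside the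
   abelian Y, the cyclic group C = <(0, x)> has index 2 with the involution
   (1, e) outside it, so A <= C has gcd(2|A|, n)/|A| extensions, one per coset
   of square roots of A.  Summing over the divisors d of n,
     |L(Z_2 x D_2n)| = sum_(d | n) (1 + 2n/d + gcd(2d, n)/d * (1 + n/d)),
   which for n = 2^(m-1) equals 4 sigma(n) + 3 tau(n) - 2; and sigma(n) = 2n - 1. *)

Set Implicit Arguments.
Unset Strict Implicit.
Unset Printing Implicit Defensive.

Lemma divnK_div n d : 0 < n -> d %| n -> n %/ (n %/ d) = d.
Proof. by move=> n_gt0 dn; rewrite divnA // mulKn. Qed.

Lemma perm_divisors_div n : 0 < n ->
  perm_eq [seq n %/ d | d <- divisors n] (divisors n).
Proof.
move=> n_gt0; apply: uniq_perm; [| exact: divisors_uniq |].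
  rewrite map_inj_in_uniq ?divisors_uniq // => d e.
  rewrite -!dvdn_divisors // => dn en eq_de.
  by rewrite -(divnK_div n_gt0 dn) eq_de divnK_div.
move=> d; rewrite -dvdn_divisors //; apply/mapP/idP => [[e] | dn].
  by rewrite -dvdn_divisors // => /dvdn_div en ->.
by exists (n %/ d); rewrite ?divnK_div // -dvdn_divisors ?dvdn_div.
Qed.

Lemma sum_divisors_div n : 0 < n -> \sum_(d <- divisors n) n %/ d = sigma n.
Proof.
by move=> n_gt0; rewrite /sigma -[RHS](perm_big _ (perm_divisors_div n_gt0)) big_map.
Qed.

Lemma perm_divisors_pfactor p k : prime p ->
  perm_eq (divisors (p ^ k)) [seq p ^ i | i <- iota 0 k.+1].
Proof.
move=> p_pr; have p_gt1 := prime_gt1 p_pr.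
apply: uniq_perm; first exact: divisors_uniq.
  by rewrite map_inj_uniq ?iota_uniq //; apply: expnI.
move=> d; rewrite -dvdn_divisors ?expn_gt0 ?prime_gt0 //; apply/idP/mapP.
  by case/dvdn_pfactor => // i ik ->; exists i; rewrite // mem_iota ltnS.
by case=> i; rewrite mem_iota ltnS => /andP[_ ik] ->; apply: dvdn_exp2l.
Qed.

Lemma sigma_pow2 k : (sigma (2 ^ k)).+1 = 2 ^ k.+1.
Proof.
rewrite /sigma (perm_big _ (perm_divisors_pfactor k (isT : prime 2))) big_map.
rewrite -[iota 0 k.+1]/(index_iota 0 k.+1) big_mkord.
by have := predn_exp 2 k.+1; rewrite mul1n => <-; rewrite prednK ?expn_gt0.
Qed.

Lemma dvdn_double_pow2 k d : d %| 2 ^ k -> d != 2 ^ k -> 2 * d %| 2 ^ k.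
Proof.
case/dvdn_pfactor=> // i ik ->; rewrite eqn_exp2l // -expnS => ne_ik.
by rewrite dvdn_exp2l // ltn_neqAle ne_ik.
Qed.

Lemma sum_divisors_pow2 k (n := 2 ^ k) (F := fun b => 1 + 2 * n %/ b) :
  \sum_(d <- divisors n) (F d + gcdn (2 * d) n %/ d * F (2 * d)) + 2
    = 3 * tau n + 4 * sigma n.
Proof.
have n_gt0 : 0 < n by rewrite expn_gt0.
have -> : 3 * tau n + 4 * sigma n = \sum_(d <- divisors n) (3 + 4 * (n %/ d)).
  by rewrite big_split /= -big_distrr sum_divisors_div //= /tau -sum1_size big_distrr.
rewrite !(bigD1_seq n) ?divisors_id ?divisors_uniq //= {}/F.
rewrite (gcdn_idPr (dvdn_mull 2 (dvdnn n))) mulnK // !divnn muln_gt0 n_gt0.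
rewrite addnAC; congr (_ + _); rewrite big_seq_cond [RHS]big_seq_cond.
apply: eq_bigr => d /andP[]; rewrite -dvdn_divisors // => dn ne_dn.
have d2n := dvdn_double_pow2 dn ne_dn; have d_gt0 : 0 < d by apply: dvdn_gt0 dn.
rewrite (gcdn_idPl d2n) mulnK // divnMl // -!muln_divA //.
by rewrite mulnDr muln1 addnACA -mulnDl.
Qed.

Import GroupScope.

Lemma joing_cycle_sq (gT : finGroupType) (A : {group gT}) s :
  s \in 'N(A) -> s ^+ 2 \in A -> A <*> <[s]> = A :|: A :* s.
Proof.
move=> nAs s2A; rewrite norm_joinEr ?cycle_subG //; apply/eqP; rewrite eqEsubset.
rewrite subUset mulG_subl /=; apply/andP; split.
  apply/subsetP => _ /mulsgP[a _ Aa /cycleP[j ->] ->].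
  rewrite -(odd_double_half j) addnC -mul2n expgD expgM mulgA inE.
  have Aas2 : a * s ^+ 2 ^+ j./2 \in A by rewrite groupM // groupX.
  by case: (odd j); rewrite ?expg0 ?mulg1 ?Aas2 // expg1 mem_rcoset mulgK Aas2 orbT.
by apply/subsetP => _ /rcosetP[a Aa ->]; rewrite mem_mulg ?cycle_id.
Qed.

Lemma setI_rcoset_notin (gT : finGroupType) (A Y : {group gT}) s :
  A \subset Y -> s \notin Y -> A :* s :&: Y = set0.
Proof.
move=> sAY nYs; apply/setP => u; rewrite inE in_set0.
apply/andP => -[/rcosetP[a Aa ->]]; apply/negP.
by apply: contra nYs; rewrite groupMl // (subsetP sAY).
Qed.

Section Index2.
Variables (gT : finGroupType) (G Y : {group gT}).
Hypotheses (nsYG : Y <| G) (iYG : #|G : Y| = 2).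

Definition extenders (A : {set gT}) :=
  [set s in G :\: Y | (s \in 'N(A)) && (s ^+ 2 \in A)].

Definition extensions (A : {set gT}) :=
  [set H : {group gT} | [&& H \subset G, H :&: Y == A & ~~ (H \subset Y)]].

Let sYG : Y \subset G. Proof. exact: normal_sub. Qed.

Lemma card_index2_setD : #|G :\: Y| = #|Y|.
Proof.
rewrite cardsD (setIidPr sYG) -(Lagrange sYG) iYG.
by rewrite muln2 -addnn addnK.
Qed.

Lemma index2_mulgV s t : s \in G :\: Y -> t \in G :\: Y -> s * t^-1 \in Y.
Proof.
move=> sGY; rewrite -(rcoset_index2 sYG iYG sGY) => /rcosetP[y Yy ->].
by rewrite invMg mulgA mulgV mul1g groupV.
Qed.

Lemma index2_expg2 s : s \in G :\: Y -> s ^+ 2 \in Y.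
Proof.
move=> sGY; have sVGY : s^-1 \in G :\: Y by rewrite !inE !groupV -in_setD.
by have := index2_mulgV sGY sVGY; rewrite invgK.
Qed.

Lemma extender_joing (A : {group gT}) s : A \subset Y -> s \in extenders A ->
  [/\ (A <*> <[s]>)%G \in extensions A, A <*> <[s]> :\: Y = A :* s
    & #|A <*> <[s]>| = (2 * #|A|)%N].
Proof.
move=> sAY /setIdP[/setDP[Gs nYs] /andP[nAs s2A]].
have sAG := subset_trans sAY sYG; have AsY0 := setI_rcoset_notin sAY nYs.
have -> : A <*> <[s]> = A :|: A :* s by exact: joing_cycle_sq.
have AsD : A :* s :\: Y = A :* s by apply/setDidPl; rewrite -setI_eq0 AsY0.
have ADY : A :\: Y = set0 by apply/eqP; rewrite setD_eq0.
split.
- rewrite inE /= joing_cycle_sq // subUset sAG mul_subG ?sub1set //=.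
  rewrite setIUl (setIidPl sAY) AsY0 setU0 eqxx /=.
  by apply: contra nYs => /subsetP; apply; rewrite inE rcoset_refl orbT.
- by rewrite setDUl ADY set0U AsD.
rewrite cardsU card_rcoset mul2n -addnn.
suff -> : A :&: A :* s = set0 by rewrite cards0 subn0.
by apply/eqP; rewrite setIC -subset0 -AsY0 setIS.
Qed.

Lemma extension_joing (A H : {group gT}) s :
  H \in extensions A -> s \in H :\: Y -> s \in extenders A /\ H = (A <*> <[s]>)%G.
Proof.
rewrite inE => /and3P[sHG /eqP HYA _] /setDP[Hs nYs].
have Gs := subsetP sHG s Hs.
have sAH : A \subset H by rewrite -HYA subsetIl.
have nAs : s \in 'N(A).
  rewrite -HYA -cycle_subG normsI // cycle_subG.
    exact: subsetP (normG H) s Hs.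
  exact: subsetP (normal_norm nsYG) s Gs.
have s2A : s ^+ 2 \in A by rewrite -HYA inE groupX // index2_expg2 // inE nYs.
split; first by apply/setIdP; rewrite in_setD nYs Gs nAs s2A.
apply: group_inj; rewrite /= joing_cycle_sq //; apply/eqP; rewrite eqEsubset.
rewrite subUset sAH /=; apply/andP; split.
  apply/subsetP => h Hh; rewrite inE; case Yh: (h \in Y); first by rewrite -HYA inE Hh Yh.
  have hsY : h * s^-1 \in Y.
    by apply: index2_mulgV; rewrite in_setD ?Yh ?nYs ?(subsetP sHG).
  by apply/orP; right; rewrite mem_rcoset -HYA in_setI hsY groupM ?groupV.
by apply/subsetP => _ /rcosetP[a Aa ->]; rewrite groupM // (subsetP sAH).
Qed.

Lemma extension_exists (A H : {group gT}) :
  H \in extensions A -> exists2 s, s \in extenders A & H = (A <*> <[s]>)%G.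
Proof.
move=> extH; have := extH; rewrite inE => /and3P[_ _ /subsetPn[s Hs nYs]].
have sHY : s \in H :\: Y by rewrite in_setD nYs.
by have [extAs ->] := extension_joing extH sHY; exists s.
Qed.

Lemma card_extension_setD (A H : {group gT}) :
  A \subset Y -> H \in extensions A -> #|H :\: Y| = #|A|.
Proof.
move=> sAY /extension_exists[s extAs ->].
by have [_ -> _] := extender_joing sAY extAs; apply: card_rcoset.
Qed.

Lemma card_extensions (A : {group gT}) :
  A \subset Y -> (#|extensions A| * #|A| = #|extenders A|)%N.
Proof.
move=> sAY; rewrite -[#|extenders A|]sum1_card.
rewrite (partition_big (fun s => (A <*> <[s]>)%G) (mem (extensions A))) /=;
  last by move=> s /(extender_joing sAY)[].
rewrite -sum_nat_const; apply: eq_bigr => H extH.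
rewrite sum1_card -(card_extension_setD sAY extH); apply: eq_card => s.
rewrite -[in RHS]topredE /=; apply/idP/andP => [sHY|[extAs /eqP <-]].
  by have [-> ->] := extension_joing extH sHY.
by have [_ -> _] := extender_joing sAY extAs; apply: rcoset_refl.
Qed.

Lemma sum_subgroups_index2 (F : nat -> nat) :
  (\sum_(H in subgroups G) F #|H| =
   \sum_(A in subgroups Y) (F #|A| + #|extenders A| %/ #|A| * F (2 * #|A|)))%N.
Proof.
rewrite (partition_big (fun H : {group gT} => (H :&: Y)%G) (mem (subgroups Y))) /=;
  last by move=> H _; rewrite inE subsetIr.
apply: eq_bigr => A; rewrite inE => sAY.
rewrite -(card_extensions sAY) mulnK // (bigD1 A) /=; last first.
  by rewrite inE (subset_trans sAY sYG) /=; apply/eqP/group_inj/setIidPl.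
(* The H <= G with H :&: Y = A are A itself and the members of extensions A. *)
congr (_ + _); rewrite -sum_nat_const; symmetry; apply: eq_big => H.
  rewrite !inE -andbA -[(H :&: Y)%G == A]val_eqE /=; case: (H \subset G) => //=.
  case: (boolP (H :&: Y == A :> {set gT})) => [/eqP HYA|] //=.
  congr negb; apply/idP/eqP => [sHY|->] //.
  by apply: group_inj; rewrite /= -HYA; apply/esym/setIidPl.
by case/extension_exists=> s extAs ->; have [_ _ ->] := extender_joing sAY extAs.
Qed.

Lemma extenders_inverting (A : {group gT}) :
    (forall s, s \in G :\: Y -> s ^+ 2 = 1 /\ {in Y, forall y, y ^ s = y^-1}) ->
  A \subset Y -> extenders A = G :\: Y.
Proof.
move=> invY sAY; apply/setP => s; rewrite inE andb_idr // => /invY[-> sinv].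
rewrite group1 andbT inE; apply/subsetP => _ /imsetP[a Aa ->].
by rewrite sinv ?groupV // (subsetP sAY).
Qed.

Lemma extenders_abelian (A : {group gT}) z :
    abelian G -> z \in G :\: Y -> z ^+ 2 = 1 -> A \subset Y ->
  extenders A = [set c in Y | c ^+ 2 \in A] :* z.
Proof.
move=> abG zGY z2 sAY; apply/setP => s; have /setDP[Gz _] := zGY.
have E : (s \in G :\: Y) = (s * z^-1 \in Y).
  by rewrite -(rcoset_index2 sYG iYG zGY) mem_rcoset.
rewrite mem_rcoset in_set E [in RHS]in_set; case Ysz: (s * z^-1 \in Y) => //=.
have Gs : s \in G by rewrite -(mulgKV z s) groupM // (subsetP sYG).
rewrite (subsetP (sub_abelian_norm abG (subset_trans sAY sYG))) //=.
have csz : commute s z^-1 by apply: (centsP abG); rewrite ?groupV.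
by rewrite expgMn // expgVn z2 invg1 mulg1.
Qed.

End Index2.

Section CyclicSubgroups.
Variables (gT : finGroupType) (a : gT).

Let mem_cycle_sub (A : {group gT}) c :
  A \subset <[a]> -> c \in <[a]> -> (c \in A) = (#[c] %| #|A|).
Proof.
by move=> sAa ac; rewrite -cycle_subG -(cardSg_cyclic (cycle_cyclic a)) ?cycle_subG.
Qed.

Lemma card_cycle_order_dvd e : e %| #[a] -> #|[set c in <[a]> | #[c] %| e]| = e.
Proof.
case/dvdnP=> q Dq; have q_gt0 : 0 < q.
  by move: (order_gt0 a); rewrite Dq muln_gt0 => /andP[].
have o_aq : #|<[a ^+ q]>| = e by rewrite -orderE orderXdiv Dq ?dvdn_mulr // mulKn.
rewrite -[RHS]o_aq; apply: eq_card => c; rewrite inE.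
case: (boolP (c \in <[a]>)) => [ac|nac] /=.
  by rewrite (mem_cycle_sub (cycleX a q)) // o_aq.
by apply/esym; apply: contraNF nac; apply/subsetP/cycleX.
Qed.

Lemma card_cycle_sqrt (A : {group gT}) : A \subset <[a]> ->
  #|[set c in <[a]> | c ^+ 2 \in A]| = gcdn (2 * #|A|) #[a].
Proof.
move=> sAa; rewrite -[RHS]card_cycle_order_dvd ?dvdn_gcdr //; apply: eq_card => c.
rewrite !inE; case: (boolP (c \in <[a]>)) => ac //=.
rewrite mem_cycle_sub ?groupX // order_dvdn -expgM -order_dvdn dvdn_gcd.
by rewrite [in #[c] %| #[a]]orderE order_dvdG ?andbT.
Qed.

Lemma perm_card_subgroups_cycle :
  perm_eq [seq #|A| | A : {group gT} <- enum (subgroups <[a]>)] (divisors #[a]).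
Proof.
apply: uniq_perm; [| exact: divisors_uniq |].
  rewrite map_inj_in_uniq ?enum_uniq // => A B; rewrite !mem_enum !inE => sAa sBa eqAB.
  by apply/val_inj/eqP; rewrite /= (eq_subG_cyclic (cycle_cyclic a)) // eqAB.
move=> d; rewrite -dvdn_divisors //; apply/mapP/idP => [[A] | da].
  by rewrite mem_enum inE => sAa ->; rewrite [#[a]]orderE cardSg.
have := cycle_sub_group da; set S := [set _ | _]; set B := <[_]>%G => ES.
have : B \in S by rewrite ES set11.
by rewrite inE => /andP[sBa /eqP <-]; exists B; rewrite // mem_enum inE.
Qed.

Lemma sum_subgroups_cycle (g : nat -> nat) :
  (\sum_(A in subgroups <[a]>) g #|A| = \sum_(d <- divisors #[a]) g d)%N.
Proof.
by rewrite -big_enum /= -(perm_big _ perm_card_subgroups_cycle) big_map.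
Qed.

End CyclicSubgroups.

Lemma Z2_expg2 (a : 'Z_2) : a ^+ 2 = 1.
Proof. by have := expg_cardG (in_setT a); rewrite cardsT card_ord. Qed.

Lemma Z2_conjg (a b : 'Z_2) : a ^ b = a^-1.
Proof.
rewrite /conjg (Zp_mulgC a) mulKg; apply/eqP.
by rewrite eq_sym eq_invg_mul -[a * a]/(a ^+ 2) Z2_expg2.
Qed.

Lemma pairX (gT1 gT2 : finGroupType) (u : gT1 * gT2) n : u ^+ n = (u.1 ^+ n, u.2 ^+ n).
Proof. by elim: n => [|n IHn] //; rewrite !expgS IHn. Qed.

Section Z2Dihedral.
Variables (gT : finGroupType) (D : {group gT}) (x : gT).
Hypotheses (Dx : x \in D) (oD : #|D| = (2 * #[x])%N).
Hypothesis invD :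
  forall t, t \in D :\: <[x]> -> t ^+ 2 = 1 /\ {in <[x]>, forall y, y ^ t = y^-1}.

Local Notation G := (setX_group [set: 'Z_2]%G D).
Local Notation Y := (setX_group [set: 'Z_2]%G <[x]>%G).
Local Notation c := (1 : 'Z_2, x).
Local Notation z := (Zp1 : 'Z_2, 1 : gT).

Lemma card_setX_cycle : #|Y| = (2 * #[x])%N.
Proof. by rewrite cardsX cardsT card_ord -orderE. Qed.

Lemma index_setX_cycle : #|G : Y| = 2.
Proof.
rewrite -divgS ?setXS ?cycle_subG // card_setX_cycle cardsX cardsT card_ord oD.
by rewrite mulnK ?muln_gt0 ?order_gt0.
Qed.

Lemma normal_setX_cycle : Y <| G.
Proof. by rewrite index2_normal ?setXS ?cycle_subG ?index_setX_cycle. Qed.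

Lemma extenders_setX_cycle (A : {group 'Z_2 * gT}) :
  A \subset Y -> extenders G Y A = G :\: Y.
Proof.
apply: extenders_inverting => -[a t]; rewrite !inE /= => /andP[nxt Dt].
have /invD[t2 inv_t] : t \in D :\: <[x]> by rewrite inE nxt.
split; first by rewrite pairX /= Z2_expg2 t2.
move=> -[b y]; rewrite !inE /= => xy.
by change ((b ^ a, y ^ t) = (b^-1, y^-1)); rewrite Z2_conjg inv_t.
Qed.

Lemma card_subgroups_setX :
  #|subgroups G| = (\sum_(A in subgroups Y) (1 + 2 * #[x] %/ #|A|))%N.
Proof.
rewrite -sum1_card (sum_subgroups_index2 normal_setX_cycle index_setX_cycle (fun=> 1%N)).
apply: eq_bigr => A; rewrite inE => sAY.
rewrite muln1 extenders_setX_cycle //.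
by rewrite (card_index2_setD normal_setX_cycle index_setX_cycle) card_setX_cycle.
Qed.

Lemma cycle_pair1 : <[c]> = setX 1 <[x]>.
Proof. by rewrite -morphim_pair1g morphim_cycle ?inE. Qed.

Lemma order_pair1 : #[c] = #[x].
Proof. by rewrite orderE cycle_pair1 cardsX cards1 mul1n -orderE. Qed.

Lemma abelian_setX_cycle : abelian Y.
Proof.
apply/centsP => -[a u] /setXP[_ xu] [b v] /setXP[_ xv].
by congr pair; [apply: Zp_mulgC | apply: (centsP (cycle_abelian x))].
Qed.

Lemma sum_subgroups_setX_cycle (F : nat -> nat) :
  (\sum_(A in subgroups Y) F #|A| =
   \sum_(A in subgroups <[c]>)
     (F #|A| + gcdn (2 * #|A|) #[x] %/ #|A| * F (2 * #|A|)))%N.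
Proof.
have sCY : <[c]> \subset Y by rewrite cycle_pair1 setXS ?sub1G.
have iCY : #|Y : <[c]>| = 2.
  by rewrite -divgS // card_setX_cycle -orderE order_pair1 mulnK ?order_gt0.
have nCY : <[c]> <| Y by rewrite -sub_abelian_normal ?abelian_setX_cycle.
have zYC : z \in Y :\: <[c]> by rewrite cycle_pair1 !inE /=.
have z2 : z ^+ 2 = 1 by rewrite pairX /= Z2_expg2 expg1n.
rewrite (sum_subgroups_index2 nCY iCY); apply: eq_bigr => A; rewrite inE => sAC.
rewrite (extenders_abelian nCY iCY abelian_setX_cycle zYC z2) // card_rcoset.
by rewrite card_cycle_sqrt // order_pair1.
Qed.

Theorem card_subgroups_Z2_dihedral (n := #[x]) (F := fun b => (1 + 2 * n %/ b)%N) :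
  #|subgroups G| =
    (\sum_(d <- divisors n) (F d + gcdn (2 * d) n %/ d * F (2 * d)))%N.
Proof.
rewrite card_subgroups_setX (sum_subgroups_setX_cycle F) /=.
rewrite (sum_subgroups_cycle c (fun d => F d + gcdn (2 * d) n %/ d * F (2 * d)))%N.
by rewrite order_pair1.
Qed.

End Z2Dihedral.

Lemma dihedral2_rotation m : 1 < m -> exists x : 'D_(2 ^ m),
  [/\ #[x] = (2 ^ m.-1)%N, #|[set: 'D_(2 ^ m)]| = (2 * #[x])%N &
      forall t, t \in [set: 'D_(2 ^ m)] :\: <[x]> ->
        t ^+ 2 = 1 /\ {in <[x]>, forall y, y ^ t = y^-1}].
Proof.
move=> m_gt1; have isoD : [set: 'D_(2 ^ m)]%G \isog 'D_(2 ^ m) := isog_refl _.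
have [[x y] genD _] := generators_2dihedral m_gt1 isoD.
have [[_ ord_t inv_t] _ _ _ _] := dihedral2_structure m_gt1 genD isoD.
case: genD => oD _ ox _; exists x; split => //.
  by rewrite oD ox -expnS prednK // ltnW.
move=> t Dxt; split; last by move=> u xu; apply: inv_t.
by apply/eqP; rewrite -order_dvdn ord_t.
Qed.

Close Scope group_scope.

Lemma card_subgroups_Z2xD m : 1 < m ->
  #|subgroups [set: Z2xD m]| + 2 = 3 * tau (2 ^ m.-1) + 4 * sigma (2 ^ m.-1).
Proof.
move=> m_gt1; have [x [ox oD invD]] := dihedral2_rotation m_gt1.
have -> : [set: Z2xD m] = setX [set: 'Z_2] [set: 'D_(2 ^ m)].
  by apply/setP => u; rewrite !inE.
by rewrite (card_subgroups_Z2_dihedral (in_setT x) oD invD) ox sum_divisors_pow2.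
Qed.

Theorem lemma2p3 (m : nat) : 2 <= m ->
  let n' := 2 ^ m.-1 in
  (#|subgroups [set: Z2xD m]|%:Z =
     5 * (sigma n')%:Z + 3 * (tau n')%:Z - 2 * n'%:Z - 1)%R.
Proof.
move=> m_gt1 n'; have := card_subgroups_Z2xD m_gt1.
have := sigma_pow2 m.-1; rewrite expnS -/n'.
lia.
Qed.
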